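(* Let $n\in\mathbb N$, $B\in\mathcal S_n(\mathcal H)$, $w\in\mathbb C\setminus\mathbb R$, and let $V:=b_w(B)Q_w$ (a partial isometry on $\mathcal H$). Let $U$ on $\mathcal K\supseteq\mathcal H$ be the minimal unitary dilation of $V$, and let $P_*$ be the orthogonal projection onto $\mathcal K\ominus\overline{\mathrm{span}}\{U^kx:k\in\mathbb Z,\ x\in\ker(B^*-w)\}$. Then for every $h\in\mathcal H$, $$(1-P_* )h=\sum_{j=0}^\infty U^{-j}P_wV^jh .$$
   Context: For a separable Hilbert space $\mathcal H$ and $n\in\mathbb N$, $\mathcal S_n(\mathcal H)$ is the set of linear transformations $B$ with domain $\mathrm{dom}(B)\subseteq\mathcal H$ (not necessarily dense) that are symmetric, closed, simple ($\bigcap_{z\in\mathbb C\setminus\mathbb R}\mathrm{ran}(B-z)=\{0\}$) and have deficiency indices $(n,n)$. For $z\in\mathbb C\setminus\mathbb R$ write $\ker(B^*-z):=\mathrm{ran}(B-\bar z)^\perp$. $b_w(z)=\frac{z-w}{z-\bar w}$; $b_w(B)=(B-w)(B-\bar w)^{-1}$ is an isometry of $\mathrm{ran}(B-\bar w)$ onto $\mathrm{ran}(B-w)$. $Q_w$ is the orthogonal projection onto $\mathrm{ran}(B-\bar w)$ and $P_w=1-Q_w$. A unitary $U$ on $\mathcal K\supseteq\mathcal H$ is a unitary dilation of a contraction $T$ on $\mathcal H$ if $T^k=P_{\mathcal H}U^k|_{\mathcal H}$ for all $k\ge0$; it is minimal if $\mathcal K$ is the smallest $U$-reducing subspace containing $\mathcal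 H$. *)

From Stdlib Require Import Reals ZArith List Classical ClassicalEpsilon.
Open Scope R_scope.

Record Cx := mkC { Cre : R; Cim : R }.
Definition C0 : Cx := mkC 0 0.
Definition C1 : Cx := mkC 1 0.
Definition Ci : Cx := mkC 0 1.
Definition Cadd (a b : Cx) : Cx := mkC (Cre a + Cre b) (Cim a + Cim b).
Definition Cmul (a b : Cx) : Cx :=
  mkC (Cre a * Cre b - Cim a * Cim b) (Cre a * Cim b + Cim a * Cre b).
Definition Copp (a : Cx) : Cx := mkC (- Cre a) (- Cim a).
Definition Cconj (a : Cx) : Cx := mkC (Cre a) (- Cim a).

(* ---------- Complex Hilbert spaces ----------
   inner product linear in the first, conjugate-linear in the second argument. *)
Record Hilbert := {
  hcar :> Type;
  hzero : hcar;
  hadd : hcar -> hcar -> hcar;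
  hopp : hcar -> hcar;
  hscal : Cx -> hcar -> hcar;
  hinner : hcar -> hcar -> Cx;
  h_addA : forall x y z, hadd x (hadd y z) = hadd (hadd x y) z;
  h_addC : forall x y, hadd x y = hadd y x;
  h_add0 : forall x, hadd x hzero = x;
  h_addN : forall x, hadd x (hopp x) = hzero;
  h_scal1 : forall x, hscal C1 x = x;
  h_scalA : forall a b x, hscal a (hscal b x) = hscal (Cmul a b) x;
  h_scalDr : forall a x y, hscal a (hadd x y) = hadd (hscal a x) (hscal a y);
  h_scalDl : forall a b x, hscal (Cadd a b) x = hadd (hscal a x) (hscal b x);
  h_innerDl : forall x y z, hinner (hadd x y) z = Cadd (hinner x z) (hinner y z);
  h_innerZl : forall a x y, hinner (hscal a x) y = Cmul a (hinner x y);
  h_innerC : forall x y, hinner y x = Cconj (hinner x y);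
  h_inner_pos : forall x, Cim (hinner x x) = 0 /\ 0 <= Cre (hinner x x);
  h_inner_def : forall x, Cre (hinner x x) = 0 -> x = hzero;
  h_complete : forall u : nat -> hcar,
    (forall eps, eps > 0 -> exists N, forall m k, (m >= N)%nat -> (k >= N)%nat ->
        sqrt (Cre (hinner (hadd (u m) (hopp (u k))) (hadd (u m) (hopp (u k))))) < eps) ->
    exists l, forall eps, eps > 0 -> exists N, forall m, (m >= N)%nat ->
        sqrt (Cre (hinner (hadd (u m) (hopp l)) (hadd (u m) (hopp l)))) < eps
}.

Arguments hzero {h}.
Arguments hadd {h}.
Arguments hopp {h}.
Arguments hscal {h}.
Arguments hinner {h}.

Section HilbertDefs.
Variable H : Hilbert.

Definition hsub (x y : H) : H := hadd x (hopp y).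
Definition hnorm (x : H) : R := sqrt (Cre (hinner x x)).

Definition conv (u : nat -> H) (l : H) : Prop :=
  forall eps, eps > 0 -> exists N, forall m, (m >= N)%nat -> hnorm (hsub (u m) l) < eps.

Fixpoint psum (f : nat -> H) (N : nat) : H :=
  match N with O => hzero | S N' => hadd (psum f N') (f N') end.
Definition series_to (f : nat -> H) (s : H) : Prop := conv (psum f) s.

Definition separable : Prop :=
  exists d : nat -> H, forall x eps, eps > 0 -> exists k, hnorm (hsub x (d k)) < eps.

Definition orth (S : H -> Prop) : H -> Prop :=
  fun y => forall x, S x -> hinner x y = C0.

Definition lincomb (l : list (Cx * H)) : H :=
  fold_right (fun p acc => hadd (hscal (fst p) (snd p)) acc) hzero l.
Definition span (S : H -> Prop) : H -> Prop :=
  fun v => exists l : list (Cx * H), Forall (fun p => S (snd p)) l /\ v = lincomb l.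
Definition closure (S : H -> Prop) : H -> Prop :=
  fun v => forall eps, eps > 0 -> exists u, S u /\ hnorm (hsub v u) < eps.
Definition cspan (S : H -> Prop) : H -> Prop := closure (span S).

Definition closed_subspace (M : H -> Prop) : Prop :=
  M hzero /\ (forall x y, M x -> M y -> M (hadd x y)) /\
  (forall a x, M x -> M (hscal a x)) /\
  (forall u l, (forall k, M (u k)) -> conv u l -> M l).

Definition proj (M : H -> Prop) (x : H) : H :=
  epsilon (inhabits hzero) (fun p => M p /\ orth M (hsub x p)).

Definition has_dim (S : H -> Prop) (n : nat) : Prop :=
  exists e : nat -> H,
    (forall i j, (i < n)%nat -> (j < n)%nat ->
       hinner (e i) (e j) = if Nat.eq_dec i j then C1 else C0) /\
    (forall v, S v <-> span (fun x => exists i, (i < n)%nat /\ x = e i) v).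

(* ---------- linear transformations with domain (not necessarily dense) ----------
   A linear transformation is given by its domain dom and a function B : H -> H
   whose values are relevant only on dom. *)
Definition lin_op (dom : H -> Prop) (B : H -> H) : Prop :=
  dom hzero /\ (forall x y, dom x -> dom y -> dom (hadd x y)) /\
  (forall a x, dom x -> dom (hscal a x)) /\
  (forall x y, dom x -> dom y -> B (hadd x y) = hadd (B x) (B y)) /\
  (forall a x, dom x -> B (hscal a x) = hscal a (B x)).

Definition symmetric (dom : H -> Prop) (B : H -> H) : Prop :=
  forall x y, dom x -> dom y -> hinner (B x) y = hinner x (B y).

Definition closed_op (dom : H -> Prop) (B : H -> H) : Prop :=
  forall (u : nat -> H) a b, (forall k, dom (u k)) -> conv u a ->
    conv (fun k => B (u k)) b -> dom a /\ B a = b.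

Definition ran (dom : H -> Prop) (B : H -> H) (z : Cx) : H -> Prop :=
  fun y => exists x, dom x /\ y = hsub (B x) (hscal z x).

(* ker(B^* - z) := ran(B - conj z)^perp *)
Definition kerBstar (dom : H -> Prop) (B : H -> H) (z : Cx) : H -> Prop :=
  orth (ran dom B (Cconj z)).

Definition simple (dom : H -> Prop) (B : H -> H) : Prop :=
  forall v, (forall z, Cim z <> 0 -> ran dom B z v) -> v = hzero.

Definition deficiency (dom : H -> Prop) (B : H -> H) (n : nat) : Prop :=
  has_dim (kerBstar dom B Ci) n /\ has_dim (kerBstar dom B (Copp Ci)) n.

Definition in_Sn (n : nat) (dom : H -> Prop) (B : H -> H) : Prop :=
  lin_op dom B /\ symmetric dom B /\ closed_op dom B /\ simple dom B /\ deficiency dom B n.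

Definition Qw (dom : H -> Prop) (B : H -> H) (w : Cx) (x : H) : H :=
  proj (ran dom B (Cconj w)) x.
Definition Pw (dom : H -> Prop) (B : H -> H) (w : Cx) (x : H) : H :=
  hsub x (Qw dom B w x).

(* b_w(B) = (B - w)(B - conj w)^{-1} on ran(B - conj w) *)
Definition bwB (dom : H -> Prop) (B : H -> H) (w : Cx) (y : H) : H :=
  let x := epsilon (inhabits hzero)
             (fun x => dom x /\ y = hsub (B x) (hscal (Cconj w) x)) in
  hsub (B x) (hscal w x).

Definition Vw (dom : H -> Prop) (B : H -> H) (w : Cx) (x : H) : H :=
  bwB dom B w (Qw dom B w x).

End HilbertDefs.

Arguments hsub {H}.
Arguments hnorm {H}.
Arguments conv {H}.
Arguments series_to {H}.
Arguments orth {H}.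
Arguments cspan {H}.
Arguments closed_subspace {H}.
Arguments proj {H}.

Definition isom_embedding (H K : Hilbert) (iota : H -> K) : Prop :=
  (forall x y, iota (hadd x y) = hadd (iota x) (iota y)) /\
  (forall a x, iota (hscal a x) = hscal a (iota x)) /\
  (forall x y, hinner (iota x) (iota y) = hinner x y).

Definition unitary (K : Hilbert) (U Uinv : K -> K) : Prop :=
  (forall x y, U (hadd x y) = hadd (U x) (U y)) /\
  (forall a x, U (hscal a x) = hscal a (U x)) /\
  (forall x y, hinner (U x) (U y) = hinner x y) /\
  (forall x, U (Uinv x) = x) /\ (forall x, Uinv (U x) = x).

Fixpoint iterN {X : Type} (k : nat) (f : X -> X) (x : X) : X :=
  match k with O => x | S k' => f (iterN k' f x) end.

Definition zpow {X : Type} (U Uinv : X -> X) (k : Z) (x : X) : X :=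
  match k with
  | Z0 => x
  | Zpos p => iterN (Pos.to_nat p) U x
  | Zneg p => iterN (Pos.to_nat p) Uinv x
  end.

(* (K, iota, U) is a unitary dilation of the contraction T on H:
   T^k = P_H U^k |_H for all k >= 0 (H identified with iota H) *)
Definition unitary_dilation (H K : Hilbert) (iota : H -> K) (U Uinv : K -> K)
    (T : H -> H) : Prop :=
  isom_embedding H K iota /\ unitary K U Uinv /\
  forall (k : nat) (x y : H),
    hinner (iterN k U (iota x)) (iota y) = hinner (iterN k T x) y.

Definition minimal_unitary_dilation (H K : Hilbert) (iota : H -> K) (U Uinv : K -> K)
    (T : H -> H) : Prop :=
  unitary_dilation H K iota U Uinv T /\
  forall M : K -> Prop, closed_subspace M ->
    (forall x, M x -> M (U x) /\ M (Uinv x)) ->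
    (forall h, M (iota h)) -> forall y, M y.

From Pilot Require Import Defs.
From Stdlib Require Import Reals ZArith Lra Lia List ClassicalEpsilon
  FunctionalExtensionality.
Open Scope R_scope.

(* [V] is a partial isometry with initial space [M = ran (B - conj w)] that vanishes on
   [M^perp = ker (B^* - w)].  The dilation identity for [k = 1] forces [U] to agree with
   [V] on [iota M], so [iota x = iota (P_w x) + U^-1 iota (V x)]; iterating,
   [iota h = sum_(j<N) U^-j iota (P_w V^j h) + U^-N iota (V^N h)].
   Since [U^m iota p] is orthogonal to [iota H] for [p] in [M^perp] and [m >= 1], the
   terms are mutually orthogonal and orthogonal to the remainders; the remainders are
   therefore Cauchy (their squared distances are differences of the decreasing norms
   [|V^N h|^2]) and their limit is orthogonal to every [U^k iota (ker (B^* - w))].  The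
   partial sums lie in the span of these vectors, so the series converges to [iota h]
   minus the projection of [iota h] onto the orthogonal complement of that span. *)

Arguments h_addA {h}.
Arguments h_addC {h}.
Arguments h_add0 {h}.
Arguments h_addN {h}.
Arguments h_scal1 {h}.
Arguments h_scalA {h}.
Arguments h_scalDr {h}.
Arguments h_scalDl {h}.
Arguments h_innerDl {h}.
Arguments h_innerZl {h}.
Arguments h_innerC {h}.
Arguments h_inner_pos {h}.
Arguments h_inner_def {h}.
Arguments h_complete {h}.

Lemma Cx_ext (a b : Cx) : Cre a = Cre b -> Cim a = Cim b -> a = b.
Proof. destruct a, b; simpl; intros -> ->; reflexivity. Qed.

Ltac cx := apply Cx_ext; simpl; try ring; try lra.

(** * Vector space and inner product identities *)

Section Algebra.
Context {H : Hilbert}.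
Implicit Types x y z p q u v : H.

Lemma add0l x : hadd hzero x = x.
Proof. rewrite h_addC; apply h_add0. Qed.

Lemma addNl x : hadd (hopp x) x = hzero.
Proof. rewrite h_addC; apply h_addN. Qed.

Lemma add_cancel_l x y z : hadd x y = hadd x z -> y = z.
Proof.
  intro E. rewrite <- (add0l y), <- (add0l z), <- (addNl x), <- !h_addA, E; reflexivity.
Qed.

Lemma opp_unique x y : hadd x y = hzero -> y = hopp x.
Proof. intro E. apply (add_cancel_l x). rewrite E, h_addN; reflexivity. Qed.

Lemma oppK x : hopp (hopp x) = x.
Proof. symmetry; apply opp_unique, addNl. Qed.

Lemma opp0 : hopp (@hzero H) = hzero.
Proof. symmetry; apply opp_unique, h_add0. Qed.

Lemma opp_add x y : hopp (hadd x y) = hadd (hopp x) (hopp y).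
Proof.
  symmetry; apply opp_unique.
  rewrite (h_addC (hopp x)), h_addA, <- (h_addA x y), h_addN, h_add0, h_addN; reflexivity.
Qed.

Lemma scal0l x : hscal C0 x = hzero.
Proof.
  apply (add_cancel_l (hscal C0 x)). rewrite h_add0, <- h_scalDl.
  f_equal. cx.
Qed.

Lemma scal0r (a : Cx) : hscal a (@hzero H) = hzero.
Proof. rewrite <- (scal0l hzero), h_scalA. f_equal; cx. Qed.

Lemma scalN1 x : hscal (mkC (-1) 0) x = hopp x.
Proof.
  apply opp_unique. rewrite <- (h_scal1 x) at 1. rewrite <- h_scalDl, <- (scal0l x).
  f_equal; cx.
Qed.

Lemma scalN (a : Cx) x : hscal a (hopp x) = hopp (hscal a x).
Proof. rewrite <- !scalN1, !h_scalA; f_equal; cx. Qed.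

Lemma scal_sub (a : Cx) x y : hscal a (hsub x y) = hsub (hscal a x) (hscal a y).
Proof. unfold hsub. rewrite h_scalDr, scalN; reflexivity. Qed.

Lemma scalC (a b : Cx) x : hscal a (hscal b x) = hscal b (hscal a x).
Proof. rewrite !h_scalA. f_equal. cx. Qed.

Lemma sub_add_add x y z u : hsub (hadd x y) (hadd z u) = hadd (hsub x z) (hsub y u).
Proof.
  unfold hsub. rewrite opp_add, <- !h_addA. f_equal.
  rewrite !h_addA. f_equal. apply h_addC.
Qed.

Lemma subvv x : hsub x x = hzero.
Proof. apply h_addN. Qed.

Lemma sub0r x : hsub x hzero = x.
Proof. unfold hsub; rewrite opp0; apply h_add0. Qed.

Lemma opp_sub x y : hopp (hsub x y) = hsub y x.
Proof. unfold hsub. rewrite opp_add, oppK, h_addC; reflexivity. Qed.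

Lemma sub_eq0 x y : hsub x y = hzero -> x = y.
Proof.
  intro E. apply opp_unique in E. rewrite <- (oppK y), E, oppK; reflexivity.
Qed.

Lemma sub_split x y z : hsub x y = hadd (hsub x z) (hsub z y).
Proof. unfold hsub. rewrite <- h_addA, (h_addA (hopp z)), addNl, add0l; reflexivity. Qed.

Lemma subK x y : hadd (hsub x y) y = x.
Proof. unfold hsub. rewrite <- h_addA, addNl, h_add0; reflexivity. Qed.

Lemma addK x y : hsub (hadd x y) y = x.
Proof. unfold hsub. rewrite <- h_addA, h_addN, h_add0; reflexivity. Qed.

Lemma add_subA x y z : hsub (hadd x y) z = hadd x (hsub y z).
Proof. unfold hsub. rewrite h_addA. reflexivity. Qed.

Lemma sub_add_addK x y z : hadd (hsub x (hadd y z)) y = hsub x z.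
Proof. unfold hsub. rewrite opp_add, (h_addC (hopp y)), h_addA. apply subK. Qed.

Lemma sub_subl x y z : hsub (hsub x z) (hsub x y) = hsub y z.
Proof.
  change (hsub (hadd x (hopp z)) (hadd x (hopp y)) = hsub y z).
  rewrite sub_add_add, subvv, add0l. unfold hsub. rewrite oppK, h_addC; reflexivity.
Qed.

Lemma sub_sub_sub x y z u : hsub (hsub x y) (hsub z u) = hsub (hsub x z) (hsub y u).
Proof.
  change (hsub (hadd x (hopp y)) (hadd z (hopp u)) = hsub (hsub x z) (hsub y u)).
  rewrite sub_add_add. unfold hsub. rewrite opp_add. reflexivity.
Qed.

Lemma inner_addr x y z : hinner x (hadd y z) = Cadd (hinner x y) (hinner x z).
Proof. rewrite h_innerC, h_innerDl, (h_innerC x y), (h_innerC x z). cx. Qed.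

Lemma inner_scalr (a : Cx) x y : hinner x (hscal a y) = Cmul (Cconj a) (hinner x y).
Proof. rewrite h_innerC, h_innerZl, (h_innerC x y). cx. Qed.

Lemma inner0l y : hinner hzero y = C0.
Proof. rewrite <- (scal0l hzero), h_innerZl. cx. Qed.

Lemma inner0r y : hinner y hzero = C0.
Proof. rewrite h_innerC, inner0l. cx. Qed.

Lemma inner_oppl x y : hinner (hopp x) y = Copp (hinner x y).
Proof. rewrite <- scalN1, h_innerZl. cx. Qed.

Lemma inner_oppr x y : hinner y (hopp x) = Copp (hinner y x).
Proof. rewrite <- scalN1, inner_scalr. cx. Qed.

Lemma inner_subl x y z : hinner (hsub x y) z = Cadd (hinner x z) (Copp (hinner y z)).
Proof. unfold hsub. rewrite h_innerDl, inner_oppl; reflexivity. Qed.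

Lemma inner_subr x y z : hinner z (hsub x y) = Cadd (hinner z x) (Copp (hinner z y)).
Proof. unfold hsub. rewrite inner_addr, inner_oppr; reflexivity. Qed.

End Algebra.

(** * Norms and convergence *)

Section Norms.
Context {H : Hilbert}.
Implicit Types x y z p q u v : H.

Definition sqnorm x : R := Cre (hinner x x).

Lemma sqnorm_ge0 x : 0 <= sqnorm x.
Proof. apply h_inner_pos. Qed.

Lemma im_inner_self x : Cim (hinner x x) = 0.
Proof. apply h_inner_pos. Qed.

Lemma sqnorm_eq0 x : sqnorm x = 0 -> x = hzero.
Proof. apply h_inner_def. Qed.

Lemma sqnorm0 : sqnorm (@hzero H) = 0.
Proof. unfold sqnorm. rewrite inner0l. reflexivity. Qed.

Lemma sqnorm_add x y : sqnorm (hadd x y) = sqnorm x + sqnorm y + 2 * Cre (hinner x y).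
Proof. unfold sqnorm. rewrite h_innerDl, !inner_addr, (h_innerC y x). simpl. ring. Qed.

Lemma sqnorm_opp x : sqnorm (hopp x) = sqnorm x.
Proof. unfold sqnorm. rewrite inner_oppl, inner_oppr. simpl. ring. Qed.

Lemma sqnorm_sub x y : sqnorm (hsub x y) = sqnorm x + sqnorm y - 2 * Cre (hinner x y).
Proof. unfold hsub. rewrite sqnorm_add, sqnorm_opp, inner_oppr. simpl. ring. Qed.

Lemma sqnorm_sub_sym x y : sqnorm (hsub x y) = sqnorm (hsub y x).
Proof. rewrite <- opp_sub, sqnorm_opp; reflexivity. Qed.

Lemma sqnorm_scal (a : Cx) x :
  sqnorm (hscal a x) = (Cre a * Cre a + Cim a * Cim a) * sqnorm x.
Proof.
  unfold sqnorm. rewrite h_innerZl, inner_scalr. pose proof (im_inner_self x).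
  destruct (hinner x x) as [r i]; simpl in *. subst. ring.
Qed.

Lemma sqnorm_add_le x y : sqnorm (hadd x y) <= 2 * sqnorm x + 2 * sqnorm y.
Proof.
  pose proof (sqnorm_add x y). pose proof (sqnorm_sub x y).
  pose proof (sqnorm_ge0 (hsub x y)). lra.
Qed.

Lemma re_inner_scal_real (t : R) x y :
  Cre (hinner x (hscal (mkC t 0) y)) = t * Cre (hinner x y).
Proof. rewrite inner_scalr. simpl. ring. Qed.

Lemma re_inner_sq_le x y : Cre (hinner x y) * Cre (hinner x y) <= sqnorm x * sqnorm y.
Proof.
  set (c := Cre (hinner x y)).
  destruct (Req_dec (sqnorm y) 0) as [Hy|Hy].
  - apply sqnorm_eq0 in Hy. subst c. rewrite Hy, inner0r, sqnorm0. simpl. lra.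
  - pose proof (sqnorm_ge0 y).
    (* expand 0 <= |x + t y|^2 at the minimizing real t *)
    set (t := - c / sqnorm y).
    pose proof (sqnorm_ge0 (hadd x (hscal (mkC t 0) y))) as N.
    rewrite sqnorm_add, sqnorm_scal, re_inner_scal_real in N. simpl in N. fold c in N.
    assert (Ht : t * sqnorm y = - c) by (unfold t; field; lra).
    assert (0 <= sqnorm x + t * c) by nra.
    assert (0 <= (sqnorm x + t * c) * sqnorm y) by (apply Rmult_le_pos; lra).
    nra.
Qed.

Lemma hnorm_ge0 x : 0 <= hnorm x.
Proof. apply sqrt_pos. Qed.

Lemma abs_re_inner_le x y : Rabs (Cre (hinner x y)) <= hnorm x * hnorm y.
Proof.
  rewrite <- sqrt_Rsqr_abs. unfold hnorm. rewrite <- sqrt_mult_alt by apply sqnorm_ge0.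
  apply sqrt_le_1_alt, re_inner_sq_le.
Qed.

Lemma abs_im_inner_le x y : Rabs (Cim (hinner x y)) <= hnorm x * hnorm y.
Proof.
  pose proof (abs_re_inner_le (hscal Ci x) y) as E.
  rewrite h_innerZl in E. unfold hnorm in E at 1. fold (sqnorm (hscal Ci x)) in E.
  rewrite sqnorm_scal in E. simpl in E.
  replace ((0 * 0 + 1 * 1) * sqnorm x) with (sqnorm x) in E by ring.
  replace (0 * Cre (hinner x y) - 1 * Cim (hinner x y)) with (- Cim (hinner x y)) in E by ring.
  rewrite Rabs_Ropp in E. exact E.
Qed.

Lemma hnorm_sq x : hnorm x * hnorm x = sqnorm x.
Proof. apply sqrt_sqrt, sqnorm_ge0. Qed.

Lemma hnorm_lt x eps : 0 < eps -> sqnorm x < eps * eps -> hnorm x < eps.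
Proof.
  intros He Hx. unfold hnorm. rewrite <- (sqrt_square eps) by lra.
  apply sqrt_lt_1_alt. split; [apply sqnorm_ge0 | exact Hx].
Qed.

Lemma sqnorm_lt x eps : hnorm x < eps -> sqnorm x < eps * eps.
Proof. intro Hx. pose proof (hnorm_ge0 x). pose proof (hnorm_sq x). nra. Qed.

Lemma hnorm_sub_sym x y : hnorm (hsub x y) = hnorm (hsub y x).
Proof. unfold hnorm. fold (sqnorm (hsub x y)) (sqnorm (hsub y x)). rewrite sqnorm_sub_sym; reflexivity. Qed.

Lemma hnorm_add_le x y : hnorm (hadd x y) <= hnorm x + hnorm y.
Proof.
  pose proof (Rle_abs (Cre (hinner x y))). pose proof (abs_re_inner_le x y).
  pose proof (hnorm_sq x). pose proof (hnorm_sq y). pose proof (hnorm_sq (hadd x y)).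
  pose proof (hnorm_ge0 x). pose proof (hnorm_ge0 y). pose proof (hnorm_ge0 (hadd x y)).
  rewrite sqnorm_add in *. nra.
Qed.

End Norms.

Section Convergence.
Context {H : Hilbert}.
Implicit Types x y z p q u v : H.

Definition sqconv (s : nat -> H) (l : H) : Prop :=
  forall eps, 0 < eps -> exists N, forall m, (m >= N)%nat -> sqnorm (hsub (s m) l) < eps.

Definition sqcauchy (s : nat -> H) : Prop :=
  forall eps, 0 < eps -> exists N, forall m k, (m >= N)%nat -> (k >= N)%nat ->
    sqnorm (hsub (s m) (s k)) < eps.

Lemma conv_sqconv s l : conv s l -> sqconv s l.
Proof.
  intros C eps He. destruct (C (sqrt eps) (sqrt_lt_R0 _ He)) as [N HN].
  exists N. intros m Hm. rewrite <- (sqrt_sqrt eps) by lra. apply sqnorm_lt, HN, Hm.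
Qed.

Lemma sqconv_conv s l : sqconv s l -> conv s l.
Proof.
  intros C eps He. destruct (C (eps * eps)) as [N HN]; [nra|].
  exists N. intros m Hm. apply hnorm_lt; [lra|]. apply HN, Hm.
Qed.

Lemma sqcauchy_sqconv s : sqcauchy s -> exists l, sqconv s l.
Proof.
  intro C. destruct (h_complete s) as [l Hl].
  - intros eps He. destruct (C (eps * eps)) as [N HN]; [nra|]. exists N.
    intros m k Hm Hk. apply (hnorm_lt (hsub (s m) (s k))); [lra|]. apply HN; assumption.
  - exists l. apply conv_sqconv. exact Hl.
Qed.

Lemma sqconv_sqcauchy s l : sqconv s l -> sqcauchy s.
Proof.
  intros C eps He. destruct (C (eps / 4)) as [N HN]; [lra|]. exists N. intros m k Hm Hk.
  rewrite (sub_split (s m) (s k) l).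
  pose proof (sqnorm_add_le (hsub (s m) l) (hsub l (s k))).
  rewrite (sqnorm_sub_sym l) in H0. pose proof (HN m Hm). pose proof (HN k Hk). lra.
Qed.

Lemma sqconv_add s t l l' : sqconv s l -> sqconv t l' ->
  sqconv (fun k => hadd (s k) (t k)) (hadd l l').
Proof.
  intros Cs Ct eps He.
  destruct (Cs (eps / 4)) as [N1 H1]; [lra|]. destruct (Ct (eps / 4)) as [N2 H2]; [lra|].
  exists (max N1 N2). intros m Hm. rewrite sub_add_add.
  pose proof (sqnorm_add_le (hsub (s m) l) (hsub (t m) l')).
  pose proof (H1 m ltac:(lia)). pose proof (H2 m ltac:(lia)). lra.
Qed.

Lemma sqconv_scal (c : Cx) s l : sqconv s l -> sqconv (fun k => hscal c (s k)) (hscal c l).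
Proof.
  intros Cs eps He. set (A := Cre c * Cre c + Cim c * Cim c).
  assert (0 <= A) by (unfold A; nra).
  destruct (Cs (eps / (A + 1))) as [N HN]. { apply Rdiv_lt_0_compat; lra. }
  exists N. intros m Hm. rewrite <- scal_sub, sqnorm_scal. fold A.
  pose proof (HN m Hm) as Hlt. pose proof (sqnorm_ge0 (hsub (s m) l)).
  apply (Rmult_lt_compat_l (A + 1)) in Hlt; [|lra].
  replace ((A + 1) * (eps / (A + 1))) with eps in Hlt by (field; lra). nra.
Qed.

Lemma inner_eq0_approx v r :
  (forall eps, 0 < eps -> exists u, hinner u r = C0 /\ hnorm (hsub v u) < eps) ->
  hinner v r = C0.
Proof.
  intro A.
  assert (Hsmall : forall eps, 0 < eps ->
            Rabs (Cre (hinner v r)) < eps /\ Rabs (Cim (hinner v r)) < eps).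
  { intros eps He. pose proof (hnorm_ge0 r).
    destruct (A (eps / (hnorm r + 1))) as [u [Hu Hn]]. { apply Rdiv_lt_0_compat; lra. }
    assert (E : hinner v r = hinner (hsub v u) r) by (rewrite inner_subl, Hu; cx).
    pose proof (hnorm_ge0 (hsub v u)).
    assert (HH : hnorm (hsub v u) * hnorm r < eps).
    { apply (Rmult_lt_compat_r (hnorm r + 1)) in Hn; [|lra].
      replace (eps / (hnorm r + 1) * (hnorm r + 1)) with eps in Hn by (field; lra). nra. }
    rewrite E. split; eapply Rle_lt_trans; [apply abs_re_inner_le | exact HH
                                            | apply abs_im_inner_le | exact HH]. }
  assert (Hzero : forall a : R, (forall eps, 0 < eps -> Rabs a < eps) -> a = 0).
  { intros a Ha. destruct (Req_dec a 0) as [|Hna]; [assumption|].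
    pose proof (Ha (Rabs a) (Rabs_pos_lt a Hna)). lra. }
  apply Cx_ext; simpl; apply Hzero; intros eps He; apply (Hsmall eps He).
Qed.

Lemma inner_eq0_lim v s r N0 :
  (forall N, (N >= N0)%nat -> hinner v (s N) = C0) -> sqconv s r -> hinner v r = C0.
Proof.
  intros Z Cs. rewrite h_innerC.
  assert (hinner r v = C0) as ->.
  { apply inner_eq0_approx. intros eps He. destruct (Cs (eps * eps)) as [N HN]; [nra|].
    exists (s (max N N0)). split.
    - rewrite h_innerC, Z by lia. cx.
    - rewrite hnorm_sub_sym. apply hnorm_lt; [lra|]. apply HN. lia. }
  cx.
Qed.

Lemma hnorm_sub_lim x s l : sqconv s l ->
  forall eps, 0 < eps -> exists N, forall k, (k >= N)%nat ->
    hnorm (hsub x l) < hnorm (hsub x (s k)) + eps.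
Proof.
  intros Cs eps He. destruct (Cs (eps * eps)) as [N HN]; [nra|]. exists N. intros k Hk.
  pose proof (hnorm_lt _ _ He (HN k Hk)).
  rewrite (sub_split x l (s k)). pose proof (hnorm_add_le (hsub x (s k)) (hsub (s k) l)). lra.
Qed.

Lemma orth_sub (S : H -> Prop) x y : orth S x -> orth S y -> orth S (hsub x y).
Proof. intros Hx Hy z Hz. rewrite inner_subr, Hx, Hy by exact Hz. cx. Qed.

Lemma orth_cspan (S : H -> Prop) r : (forall y, S y -> hinner y r = C0) ->
  orth (cspan S) r.
Proof.
  intros HS v Hv. apply inner_eq0_approx. intros eps He.
  destruct (Hv eps He) as [u [[l [Fl ->]] Hn]]. exists (lincomb H l). split; [|exact Hn].
  clear Hn. induction l as [|[c y] l IH]; simpl.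
  - apply inner0l.
  - inversion Fl; subst. rewrite h_innerDl, h_innerZl, HS, IH by auto. cx.
Qed.

Lemma psum_span (S : H -> Prop) (f : nat -> H) : (forall j, S (f j)) ->
  forall N, span H S (psum H f N).
Proof.
  intros Hf N. induction N as [|N [l [Fl El]]].
  - exists nil. split; [constructor | reflexivity].
  - exists ((Defs.C1, f N) :: l). split; [constructor; [apply Hf | exact Fl]|].
    simpl. rewrite El, h_scal1, h_addC. reflexivity.
Qed.

End Convergence.

Lemma inv_INR_S_lt (e : R) : 0 < e -> exists N, forall k, (k >= N)%nat -> / INR (S k) < e.
Proof.
  intro He. destruct (archimed_cor1 e He) as [N [HN HN0]]. exists N. intros k Hk.
  eapply Rle_lt_trans; [|exact HN]. apply Rinv_le_contravar.
  - apply lt_0_INR; lia.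
  - apply le_INR; lia.
Qed.

Lemma inv_INR_S_bounds (k : nat) : 0 < / INR (S k) <= 1.
Proof.
  split; [apply Rinv_0_lt_compat, lt_0_INR; lia|].
  rewrite <- Rinv_1. apply Rinv_le_contravar; [lra|]. rewrite S_INR. pose proof (pos_INR k). lra.
Qed.

Lemma quad_le_coef0 (c A : R) : 0 <= A -> (forall t, 2 * t * c <= t * t * A) -> c = 0.
Proof.
  intros HA Ht. specialize (Ht (c / (A + 1))).
  assert (Hc : c / (A + 1) * (A + 1) = c) by (field; lra).
  set (t := c / (A + 1)) in *. nra.
Qed.

(** * Orthogonal projections *)

Section Projection.
Context {H : Hilbert}.
Implicit Types x y p q m : H.

Lemma closed_subspace_sub (M : H -> Prop) : closed_subspace M ->
  forall x y, M x -> M y -> M (hsub x y).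
Proof.
  intros [_ [Madd [Mscal _]]] x y Mx My. unfold hsub. apply Madd; [exact Mx|].
  rewrite <- scalN1. apply Mscal, My.
Qed.

Lemma proj_unique (M : H -> Prop) (Msub : forall x y, M x -> M y -> M (hsub x y)) x p :
  M p -> orth M (hsub x p) -> proj M x = p.
Proof.
  intros Mp Op. unfold proj.
  pose proof (epsilon_spec (inhabits hzero) (fun q => M q /\ orth M (hsub x q))
                (ex_intro _ p (conj Mp Op))) as Hq.
  set (q := epsilon _ _) in *. destruct Hq as [Mq Oq].
  apply sub_eq0, sqnorm_eq0.
  assert (Od : orth M (hsub q p)) by (rewrite <- (sub_subl x q p); apply orth_sub; assumption).
  unfold sqnorm. rewrite (Od _ (Msub _ _ Mq Mp)). reflexivity.
Qed.

Lemma proj_spec (M : H -> Prop) x :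
  (exists p, M p /\ orth M (hsub x p)) -> M (proj M x) /\ orth M (hsub x (proj M x)).
Proof. apply (epsilon_spec (inhabits hzero) (fun q => M q /\ orth M (hsub x q))). Qed.

Lemma orth_of_re_inner (M : H -> Prop) (Mscal : forall a x, M x -> M (hscal a x)) y :
  (forall m, M m -> Cre (hinner y m) = 0) -> orth M y.
Proof.
  intros R m Hm. rewrite h_innerC.
  pose proof (R m Hm). pose proof (R (hscal Ci m) (Mscal _ _ Hm)) as Ri.
  rewrite inner_scalr in Ri. simpl in Ri. apply Cx_ext; simpl; lra.
Qed.

Lemma orth_of_nearest (M : H -> Prop)
  (Madd : forall x y, M x -> M y -> M (hadd x y)) (Mscal : forall a x, M x -> M (hscal a x))
  x p : M p -> (forall m, M m -> hnorm (hsub x p) <= hnorm (hsub x m)) -> orth M (hsub x p).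
Proof.
  intros Mp Hmin. apply (orth_of_re_inner M Mscal). intros m Mm.
  apply (quad_le_coef0 _ (sqnorm m) (sqnorm_ge0 m)). intro t.
  pose proof (Hmin _ (Madd _ _ Mp (Mscal (mkC t 0) _ Mm))) as Ht.
  assert (E : hsub x (hadd p (hscal (mkC t 0) m)) = hsub (hsub x p) (hscal (mkC t 0) m)).
  { unfold hsub. rewrite opp_add, h_addA. reflexivity. }
  rewrite E in Ht.
  set (y := hsub (hsub x p) (hscal (mkC t 0) m)) in Ht.
  pose proof (hnorm_ge0 (hsub x p)). pose proof (hnorm_ge0 y).
  assert (Hsq : sqnorm (hsub x p) <= sqnorm y).
  { rewrite <- !hnorm_sq. apply Rmult_le_compat; assumption. }
  unfold y in Hsq. rewrite (sqnorm_sub (hsub x p)), sqnorm_scal, re_inner_scal_real in Hsq. simpl in Hsq.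
  nra.
Qed.

Lemma dist_inf_exists (M : H -> Prop) x : M hzero ->
  exists d, 0 <= d /\ (forall m, M m -> d <= hnorm (hsub x m)) /\
    (forall eps, 0 < eps -> exists m, M m /\ hnorm (hsub x m) < d + eps).
Proof.
  intro M0.
  set (E := fun r => exists m, M m /\ r = - hnorm (hsub x m)).
  assert (E0 : is_upper_bound E 0).
  { intros r [m [_ ->]]. pose proof (hnorm_ge0 (hsub x m)). lra. }
  destruct (completeness E (ex_intro _ 0 E0) (ex_intro _ _ (ex_intro _ hzero (conj M0 eq_refl))))
    as [L [Lub Lleast]].
  exists (- L). split; [pose proof (Lleast 0 E0); lra|]. split.
  - intros m Mm. pose proof (Lub _ (ex_intro _ m (conj Mm eq_refl))). lra.
  - intros eps He. apply NNPP. intro Hno.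
    assert (is_upper_bound E (L - eps)).
    { intros r [m [Mm ->]]. apply Rnot_lt_le. intro Hlt.
      apply Hno. exists m. split; [exact Mm | lra]. }
    pose proof (Lleast _ H0). lra.
Qed.

Lemma parallelogram_mid x m1 m2 :
  sqnorm (hsub m1 m2) = 2 * sqnorm (hsub x m1) + 2 * sqnorm (hsub x m2)
                        - 4 * sqnorm (hsub x (hscal (mkC (/ 2) 0) (hadd m1 m2))).
Proof.
  assert (Eadd : hadd (hsub x m1) (hsub x m2)
                 = hscal (mkC 2 0) (hsub x (hscal (mkC (/ 2) 0) (hadd m1 m2)))).
  { rewrite scal_sub, h_scalA.
    replace (Cmul (mkC 2 0) (mkC (/ 2) 0)) with Defs.C1 by (apply Cx_ext; simpl; field).
    rewrite h_scal1, <- sub_add_add. f_equal.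
    rewrite <- (h_scal1 x) at 1 2. rewrite <- h_scalDl.
    replace (Cadd Defs.C1 Defs.C1) with (mkC 2 0) by cx. reflexivity. }
  pose proof (sqnorm_add (hsub x m1) (hsub x m2)) as N1.
  pose proof (sqnorm_sub (hsub x m1) (hsub x m2)) as N2.
  rewrite Eadd, sqnorm_scal in N1. rewrite sub_subl in N2. rewrite sqnorm_sub_sym.
  simpl in N1. lra.
Qed.

Lemma minimizing_sqcauchy (M : H -> Prop)
  (Mmid : forall m1 m2, M m1 -> M m2 -> M (hscal (mkC (/ 2) 0) (hadd m1 m2)))
  x d (s : nat -> H) :
  0 <= d -> (forall m, M m -> d <= hnorm (hsub x m)) ->
  (forall k, M (s k)) -> (forall k, hnorm (hsub x (s k)) < d + / INR (S k)) ->
  sqcauchy s.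
Proof.
  intros Hd Hinf Ms Hs.
  assert (Hbound : forall k l, sqnorm (hsub (s k) (s l))
                               <= (4 * d + 2) * (/ INR (S k) + / INR (S l))).
  { intros k l. rewrite (parallelogram_mid x).
    pose proof (Hinf _ (Mmid _ _ (Ms k) (Ms l))) as Hmid.
    pose proof (hnorm_sq (hsub x (hscal (mkC (/ 2) 0) (hadd (s k) (s l))))).
    pose proof (sqnorm_lt _ _ (Hs k)). pose proof (sqnorm_lt _ _ (Hs l)).
    pose proof (inv_INR_S_bounds k). pose proof (inv_INR_S_bounds l). nra. }
  intros eps He. destruct (inv_INR_S_lt (eps / (2 * (4 * d + 2)))) as [N HN].
  { apply Rdiv_lt_0_compat; lra. }
  exists N. intros k l Hk Hl. pose proof (HN k Hk). pose proof (HN l Hl).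
  eapply Rle_lt_trans; [apply Hbound|].
  apply (Rmult_lt_compat_l (4 * d + 2)) in H0; [|lra].
  apply (Rmult_lt_compat_l (4 * d + 2)) in H1; [|lra].
  replace ((4 * d + 2) * (eps / (2 * (4 * d + 2)))) with (eps / 2) in * by (field; lra).
  lra.
Qed.

Theorem proj_exists (M : H -> Prop) : closed_subspace M ->
  forall x, exists p, M p /\ orth M (hsub x p).
Proof.
  intros HM x. pose proof HM as [M0 [Madd [Mscal Mclosed]]].
  destruct (dist_inf_exists M x M0) as [d [Hd [Hinf Happrox]]].
  assert (Hs : forall k, {m | M m /\ hnorm (hsub x m) < d + / INR (S k)}).
  { intro k. apply constructive_indefinite_description, Happrox, inv_INR_S_bounds. }
  set (s := fun k => proj1_sig (Hs k)).
  assert (Ms : forall k, M (s k)) by (intro k; apply (proj2_sig (Hs k))).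
  assert (Hsd : forall k, hnorm (hsub x (s k)) < d + / INR (S k))
    by (intro k; apply (proj2_sig (Hs k))).
  destruct (sqcauchy_sqconv s) as [p Hp].
  { apply (minimizing_sqcauchy M) with x d; auto. }
  assert (Mp : M p) by (apply (Mclosed s p Ms), sqconv_conv, Hp).
  exists p. split; [exact Mp|]. apply orth_of_nearest; auto.
  intros m Mm. apply Rle_trans with d; [|apply Hinf, Mm].
  apply le_epsilon. intros eps He.
  destruct (hnorm_sub_lim x s p Hp (eps / 2)) as [N1 HN1]; [lra|].
  destruct (inv_INR_S_lt (eps / 2)) as [N2 HN2]; [lra|].
  pose proof (HN1 (max N1 N2) ltac:(lia)). pose proof (HN2 (max N1 N2) ltac:(lia)).
  pose proof (Hsd (max N1 N2)). lra.
Qed.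

End Projection.

Section ProjectionOnto.
Context {H : Hilbert} (M : H -> Prop).
Hypothesis HM : closed_subspace M.

Lemma proj_mem (x : H) : M (proj M x).
Proof. apply proj_spec, proj_exists, HM. Qed.

Lemma proj_orth (x : H) : orth M (hsub x (proj M x)).
Proof. apply proj_spec, proj_exists, HM. Qed.

Lemma proj_id (u : H) : M u -> proj M u = u.
Proof.
  intro Mu. apply (proj_unique M (closed_subspace_sub M HM)); [exact Mu|].
  rewrite subvv. intros y _. apply inner0r.
Qed.

Lemma proj_orth_zero (y : H) : orth M y -> proj M y = hzero.
Proof.
  intro Oy. apply (proj_unique M (closed_subspace_sub M HM)); [apply HM|].
  rewrite sub0r. exact Oy.
Qed.

End ProjectionOnto.

(** * Symmetric operators and the Cayley transform *)

Section Symmetric.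
Context {H : Hilbert} (dom : H -> Prop) (B : H -> H).
Hypothesis Hlin : lin_op H dom B.
Hypothesis Hsym : symmetric H dom B.

Definition shift (c : Cx) (x : H) : H := hsub (B x) (hscal c x).

Lemma lin_B0 : B hzero = hzero.
Proof.
  destruct Hlin as [D0 [_ [_ [Badd _]]]].
  specialize (Badd hzero hzero D0 D0). rewrite h_add0 in Badd.
  apply (add_cancel_l (B hzero)). rewrite h_add0. symmetry. exact Badd.
Qed.

Lemma lin_dom_sub x y : dom x -> dom y -> dom (hsub x y).
Proof.
  destruct Hlin as [_ [Dadd [Dscal _]]]. intros Dx Dy. unfold hsub.
  apply Dadd; [exact Dx|]. rewrite <- scalN1. apply Dscal, Dy.
Qed.

Lemma shift_sub c x y : dom x -> dom y -> shift c (hsub x y) = hsub (shift c x) (shift c y).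
Proof.
  destruct Hlin as [_ [_ [Dscal [Badd Bscal]]]]. intros Dx Dy. unfold shift.
  assert (EB : B (hsub x y) = hsub (B x) (B y)).
  { unfold hsub. rewrite <- !scalN1, Badd, Bscal by auto. reflexivity. }
  rewrite EB, scal_sub. apply sub_sub_sub.
Qed.

Lemma im_inner_sym x : dom x -> Cim (hinner (B x) x) = 0.
Proof.
  intro Dx. pose proof (Hsym x x Dx Dx) as E. rewrite (h_innerC (B x) x) in E.
  destruct (hinner (B x) x) as [r i]. unfold Cconj in E. simpl in *. injection E. lra.
Qed.

(* Symmetry kills the cross term between [B - Re c] and [Im c]. *)
Lemma sqnorm_shift c x : dom x ->
  sqnorm (shift c x) = sqnorm (shift (mkC (Cre c) 0) x) + Cim c * Cim c * sqnorm x.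
Proof.
  intro Dx. unfold shift.
  assert (Ec : hscal c x = hadd (hscal (mkC (Cre c) 0) x) (hscal (mkC 0 (Cim c)) x)).
  { rewrite <- h_scalDl. f_equal. destruct c; cx. }
  assert (Esub : forall a b, hsub (B x) (hadd a b) = hadd (hsub (B x) a) (hopp b)).
  { intros a b. unfold hsub. rewrite opp_add, h_addA. reflexivity. }
  rewrite Ec, Esub, sqnorm_add, sqnorm_opp, sqnorm_scal, inner_oppr, inner_scalr, inner_subl,
    h_innerZl.
  simpl. rewrite (im_inner_sym x Dx). unfold sqnorm. rewrite im_inner_self. ring.
Qed.

Lemma sqnorm_shift_ge c x : dom x -> Cim c * Cim c * sqnorm x <= sqnorm (shift c x).
Proof.
  intro Dx. rewrite (sqnorm_shift c x Dx). pose proof (sqnorm_ge0 (shift (mkC (Cre c) 0) x)).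
  lra.
Qed.

Lemma sqnorm_shift_conj c x : dom x -> sqnorm (shift (Cconj c) x) = sqnorm (shift c x).
Proof. intro Dx. rewrite (sqnorm_shift (Cconj c) x Dx), (sqnorm_shift c x Dx). simpl. ring. Qed.

Lemma ran_closed_subspace c : closed_op H dom B -> Cim c <> 0 -> closed_subspace (ran H dom B c).
Proof.
  intros Hclosed Hc. pose proof Hlin as [D0 [Dadd [Dscal [Badd Bscal]]]].
  split; [|split; [|split]].
  - exists hzero. split; [exact D0|]. rewrite lin_B0, scal0r, subvv. reflexivity.
  - intros y1 y2 [x1 [D1 ->]] [x2 [D2 ->]]. exists (hadd x1 x2). split; [auto|].
    rewrite Badd, h_scalDr by auto. symmetry. apply sub_add_add.
  - intros a y [x [Dx ->]]. exists (hscal a x). split; [auto|].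
    rewrite Bscal by auto. rewrite scal_sub, scalC. reflexivity.
  - intros u l Hu Cu.
    assert (Hpre : forall k, {x | dom x /\ u k = shift c x}).
    { intro k. apply constructive_indefinite_description, Hu. }
    set (xs := fun k => proj1_sig (Hpre k)).
    assert (Dxs : forall k, dom (xs k)) by (intro k; apply (proj2_sig (Hpre k))).
    assert (Exs : forall k, u k = shift c (xs k)) by (intro k; apply (proj2_sig (Hpre k))).
    apply conv_sqconv in Cu. pose proof (sqconv_sqcauchy u l Cu) as Cau.
    assert (Hpos : 0 < Cim c * Cim c) by (apply Rsqr_pos_lt in Hc; exact Hc).
    (* [B - c] is bounded below, so its preimages form a Cauchy sequence too. *)
    assert (Cxs : sqcauchy xs).
    { intros eps He. destruct (Cau (eps * (Cim c * Cim c))) as [N HN]; [nra|].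
      exists N. intros m k Hm Hk. pose proof (HN m k Hm Hk) as E.
      rewrite !Exs, <- shift_sub in E by auto.
      pose proof (sqnorm_shift_ge c _ (lin_dom_sub _ _ (Dxs m) (Dxs k))). nra. }
    destruct (sqcauchy_sqconv xs Cxs) as [x Hx].
    assert (CB : sqconv (fun k => B (xs k)) (hadd l (hscal c x))).
    { replace (fun k => B (xs k)) with (fun k => hadd (u k) (hscal c (xs k))).
      - apply sqconv_add; [exact Cu|]. apply sqconv_scal, Hx.
      - apply functional_extensionality. intro k. rewrite Exs. apply subK. }
    destruct (Hclosed xs x _ Dxs (sqconv_conv _ _ Hx) (sqconv_conv _ _ CB)) as [Dx EB].
    exists x. split; [exact Dx|]. rewrite EB, addK. reflexivity.
Qed.

Lemma bwB_isometric w y : ran H dom B (Cconj w) y -> sqnorm (bwB H dom B w y) = sqnorm y.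
Proof.
  intro Hy. unfold bwB.
  destruct (epsilon_spec (inhabits hzero)
              (fun x => dom x /\ y = hsub (B x) (hscal (Cconj w) x)) Hy) as [Dx Ey].
  set (x := epsilon _ _) in *. rewrite Ey. symmetry. apply (sqnorm_shift_conj w _ Dx).
Qed.

Section CayleyPartialIsometry.
Variable w : Cx.
Hypothesis HM : closed_subspace (ran H dom B (Cconj w)).

Lemma Vw_proj x : Vw H dom B w (proj (ran H dom B (Cconj w)) x) = Vw H dom B w x.
Proof. unfold Vw, Qw. rewrite (proj_id _ HM _ (proj_mem _ HM x)). reflexivity. Qed.

Lemma Vw_isometric u : ran H dom B (Cconj w) u -> sqnorm (Vw H dom B w u) = sqnorm u.
Proof. intro Mu. unfold Vw, Qw. rewrite (proj_id _ HM u Mu). apply bwB_isometric, Mu. Qed.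

End CayleyPartialIsometry.

End Symmetric.

(** * Unitary dilations of a partial isometry *)

Section Iterates.
Context {X : Type}.
Implicit Types f g : X -> X.

Lemma iterN_Sr f k x : iterN (S k) f x = iterN k f (f x).
Proof. induction k as [|k IH]; simpl in *; [reflexivity|]. rewrite IH. reflexivity. Qed.

Lemma iterN_add f a b x : iterN (a + b) f x = iterN a f (iterN b f x).
Proof. induction a as [|a IH]; simpl; [reflexivity|]. rewrite IH. reflexivity. Qed.

Lemma iterN_fixpoint f z : f z = z -> forall k, iterN k f z = z.
Proof. intros E k; induction k as [|k IH]; simpl; [reflexivity|]. rewrite IH. exact E. Qed.

Lemma iterN_cancel f g : (forall x, f (g x) = x) -> forall k x, iterN k f (iterN k g x) = x.
Proof.
  intros fgK k. induction k as [|k IH]; intro x; [reflexivity|].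
  rewrite iterN_Sr. simpl. rewrite fgK. apply IH.
Qed.

Lemma zpow_opp_nat f g j x : zpow f g (Z.opp (Z.of_nat j)) x = iterN j g x.
Proof. destruct j; [reflexivity|]. simpl. rewrite SuccNat2Pos.id_succ. reflexivity. Qed.

Lemma iterN_zpow_pos f g : (forall x, f (g x) = x) ->
  forall k N y, (N >= Z.abs_nat k + 1)%nat ->
  exists m, (m >= 1)%nat /\ iterN N f (zpow f g k y) = iterN m f y.
Proof.
  intros fgK k N y HN. destruct k as [|p|p]; simpl in *.
  - exists N. split; [lia | reflexivity].
  - exists (N + Pos.to_nat p)%nat. split; [lia|]. rewrite iterN_add. reflexivity.
  - exists (N - Pos.to_nat p)%nat. split; [lia|].
    replace N with ((N - Pos.to_nat p) + Pos.to_nat p)%nat at 1 by lia.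
    rewrite iterN_add, iterN_cancel by exact fgK. reflexivity.
Qed.

End Iterates.

Lemma iterN_additive {H : Hilbert} (f : H -> H) :
  (forall x y, f (hadd x y) = hadd (f x) (f y)) ->
  forall k x y, iterN k f (hadd x y) = hadd (iterN k f x) (iterN k f y).
Proof. intros Hf k; induction k as [|k IH]; intros; simpl; [reflexivity|]. rewrite IH, Hf. reflexivity. Qed.

Lemma iterN_inner {H : Hilbert} (f : H -> H) :
  (forall x y, hinner (f x) (f y) = hinner x y) ->
  forall k x y, hinner (iterN k f x) (iterN k f y) = hinner x y.
Proof. intros Hf k; induction k as [|k IH]; intros; simpl; [reflexivity|]. rewrite Hf, IH. reflexivity. Qed.

Definition proj_compl {H : Hilbert} (M : H -> Prop) (x : H) : H := hsub x (proj M x).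

Section PartialIsometryDilation.
Context {H K : Hilbert} (M : H -> Prop) (V : H -> H) (iota : H -> K) (U Uinv : K -> K).
Hypothesis HM : closed_subspace M.
Hypothesis V_proj : forall x, V (proj M x) = V x.
Hypothesis V_isometric : forall u, M u -> sqnorm (V u) = sqnorm u.
Hypothesis Hdil : unitary_dilation H K iota U Uinv V.

Lemma V_orth_zero p : orth M p -> V p = hzero.
Proof.
  intro Op. rewrite <- V_proj, (proj_orth_zero M HM p Op).
  apply sqnorm_eq0. rewrite V_isometric by apply HM. apply sqnorm0.
Qed.

Lemma sqnorm_proj_compl_V x : sqnorm x = sqnorm (proj_compl M x) + sqnorm (V x).
Proof.
  rewrite <- V_proj, V_isometric by apply (proj_mem M HM).
  rewrite <- (subK x (proj M x)) at 1. rewrite sqnorm_add, h_innerC.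
  rewrite (proj_orth M HM x _ (proj_mem M HM x)). simpl. unfold proj_compl. ring.
Qed.

Lemma iota_add x y : iota (hadd x y) = hadd (iota x) (iota y).
Proof. destruct Hdil as [[Ha _] _]. apply Ha. Qed.

Lemma sqnorm_iota x : sqnorm (iota x) = sqnorm x.
Proof. destruct Hdil as [[_ [_ Hi]] _]. unfold sqnorm. rewrite Hi. reflexivity. Qed.

Lemma U_inner (a b : K) : hinner (U a) (U b) = hinner a b.
Proof. destruct Hdil as [_ [[_ [_ [Hi _]]] _]]. apply Hi. Qed.

Lemma U_Uinv (a : K) : U (Uinv a) = a.
Proof. destruct Hdil as [_ [[_ [_ [_ [HK _]]]] _]]. apply HK. Qed.

Lemma Uinv_U (a : K) : Uinv (U a) = a.
Proof. destruct Hdil as [_ [[_ [_ [_ [_ HK]]]] _]]. apply HK. Qed.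

Lemma Uinv_add (a b : K) : Uinv (hadd a b) = hadd (Uinv a) (Uinv b).
Proof.
  destruct Hdil as [_ [[Ua _] _]].
  rewrite <- (U_Uinv a), <- (U_Uinv b) at 1. rewrite <- Ua. apply Uinv_U.
Qed.

Lemma Uinv_inner (a b : K) : hinner (Uinv a) (Uinv b) = hinner a b.
Proof. rewrite <- U_inner, !U_Uinv. reflexivity. Qed.

Lemma dilation_inner k x y : hinner (iterN k U (iota x)) (iota y) = hinner (iterN k V x) y.
Proof. destruct Hdil as [_ [_ Hk]]. apply Hk. Qed.

(* The case [k = 1] of the dilation identity gives
   [<U (iota u), iota (V x)> = |V x|^2 = |U (iota u)|^2]. *)
Lemma U_iota_proj x : U (iota (proj M x)) = iota (V x).
Proof.
  set (u := proj M x).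
  assert (Vu : V u = V x) by apply V_proj.
  apply sub_eq0, sqnorm_eq0. rewrite sqnorm_sub.
  pose proof (dilation_inner 1 u (V x)) as E1. simpl in E1. rewrite E1, Vu.
  assert (Hu : sqnorm (U (iota u)) = sqnorm (V x)).
  { unfold sqnorm at 1. rewrite U_inner. fold (sqnorm (iota u)).
    rewrite sqnorm_iota, <- Vu. symmetry. apply V_isometric, (proj_mem M HM). }
  rewrite Hu, sqnorm_iota. unfold sqnorm. ring.
Qed.

Lemma iota_split x : iota x = hadd (iota (proj_compl M x)) (Uinv (iota (V x))).
Proof.
  rewrite <- U_iota_proj, Uinv_U, <- iota_add. unfold proj_compl. rewrite subK. reflexivity.
Qed.

Lemma dilation_orth_zero p y m : orth M p -> (m >= 1)%nat ->
  hinner (iterN m U (iota p)) (iota y) = C0.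
Proof.
  intros Op Hm. rewrite dilation_inner. destruct m as [|m]; [lia|].
  rewrite iterN_Sr, (V_orth_zero p Op), iterN_fixpoint; [apply inner0l|].
  apply V_orth_zero. intros z _. apply inner0r.
Qed.

Definition defect_orbit : K -> Prop :=
  fun y => exists (k : Z) (x : H), orth M x /\ y = zpow U Uinv k (iota x).

Section Orbit.
Variable h : H.

Definition remainder (N : nat) : K := iterN N Uinv (iota (iterN N V h)).

Definition wold_term (j : nat) : K :=
  zpow U Uinv (Z.opp (Z.of_nat j)) (iota (proj_compl M (iterN j V h))).

Lemma remainder_S N : remainder N = hadd (wold_term N) (remainder (S N)).
Proof.
  unfold remainder, wold_term. rewrite zpow_opp_nat, (iota_split (iterN N V h)).
  rewrite iterN_additive by exact Uinv_add. rewrite (iterN_Sr Uinv N). reflexivity.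
Qed.

Lemma psum_wold_term N : psum K wold_term N = hsub (iota h) (remainder N).
Proof.
  induction N as [|N IH].
  - symmetry. apply subvv.
  - simpl. rewrite IH, (remainder_S N). apply sub_add_addK.
Qed.

Lemma sqnorm_remainder N : sqnorm (remainder N) = sqnorm (iterN N V h).
Proof.
  unfold remainder, sqnorm. rewrite iterN_inner by exact Uinv_inner. apply sqnorm_iota.
Qed.

Lemma wold_term_orth_remainder j N : (j < N)%nat -> hinner (wold_term j) (remainder N) = C0.
Proof.
  intro Hj. unfold wold_term, remainder. rewrite zpow_opp_nat.
  replace N with (j + (N - j))%nat by lia.
  rewrite iterN_add, iterN_inner by exact Uinv_inner.
  rewrite <- (iterN_inner U U_inner (N - j)), iterN_cancel by exact U_Uinv.
  apply dilation_orth_zero; [apply (proj_orth M HM) | lia].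
Qed.

Lemma remainder_diff_orth d N :
  hinner (hsub (remainder N) (remainder (N + d))) (remainder (N + d)) = C0.
Proof.
  revert N. induction d as [|d IH]; intro N.
  - rewrite Nat.add_0_r, subvv. apply inner0l.
  - rewrite (remainder_S N) at 1. rewrite add_subA, h_innerDl, wold_term_orth_remainder by lia.
    replace (N + S d)%nat with (S N + d)%nat by lia. rewrite IH. cx.
Qed.

Lemma sqnorm_remainder_diff d N :
  sqnorm (hsub (remainder N) (remainder (N + d)))
  = sqnorm (iterN N V h) - sqnorm (iterN (N + d) V h).
Proof.
  rewrite <- !sqnorm_remainder.
  rewrite <- (subK (remainder N) (remainder (N + d))) at 2.
  rewrite sqnorm_add, remainder_diff_orth. simpl. ring.
Qed.

(* By [sqnorm_remainder_diff], the remainders are Cauchy because the norms [|V^N h|]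
   decrease. *)
Lemma remainder_sqcauchy : sqcauchy remainder.
Proof.
  set (s := fun N => sqnorm (iterN N V h)).
  assert (Sdec : Un_decreasing s).
  { intro k. unfold s. rewrite (sqnorm_proj_compl_V (iterN k V h)).
    pose proof (sqnorm_ge0 (proj_compl M (iterN k V h))). simpl. lra. }
  assert (Slb : has_lb s).
  { exists 0. intros x [i ->]. unfold opp_seq, s. pose proof (sqnorm_ge0 (iterN i V h)). lra. }
  pose proof (CV_Cauchy s (decreasing_cv s Sdec Slb)) as SC.
  intros eps He. destruct (SC eps He) as [N HN]. exists N. intros m k Hm Hk.
  pose proof (HN m k Hm Hk) as Hd. unfold Rdist in Hd.
  destruct (le_lt_dec m k) as [Hmk|Hmk].
  - replace k with (m + (k - m))%nat by lia. rewrite sqnorm_remainder_diff.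
    replace (m + (k - m))%nat with k by lia. eapply Rle_lt_trans; [apply Rle_abs | exact Hd].
  - rewrite sqnorm_sub_sym. replace m with (k + (m - k))%nat by lia.
    rewrite sqnorm_remainder_diff. replace (k + (m - k))%nat with m by lia.
    rewrite Rabs_minus_sym in Hd. eapply Rle_lt_trans; [apply Rle_abs | exact Hd].
Qed.

Lemma remainder_lim_orth r : sqconv remainder r -> orth (cspan defect_orbit) r.
Proof.
  intro Hr. apply orth_cspan. intros y [k [x [Ox ->]]].
  apply (inner_eq0_lim _ remainder r (Z.abs_nat k + 1)); [|exact Hr].
  intros N HN. unfold remainder.
  rewrite <- (iterN_inner U U_inner N), iterN_cancel by exact U_Uinv.
  destruct (iterN_zpow_pos U Uinv U_Uinv k N (iota x) HN) as [m [Hm ->]].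
  apply dilation_orth_zero; assumption.
Qed.

Theorem wold_series :
  series_to wold_term (hsub (iota h) (proj (orth (cspan defect_orbit)) (iota h))).
Proof.
  destruct (sqcauchy_sqconv _ remainder_sqcauchy) as [r Hr].
  assert (Hpsum : sqconv (psum K wold_term) (hsub (iota h) r)).
  { intros eps He. destruct (Hr eps He) as [N HN]. exists N. intros m Hm.
    rewrite psum_wold_term, sub_subl, sqnorm_sub_sym. apply HN, Hm. }
  assert (Hspan : cspan defect_orbit (hsub (iota h) r)).
  { intros eps He. destruct (sqconv_conv _ _ Hpsum eps He) as [N HN].
    exists (psum K wold_term N). split.
    - apply psum_span. intro j. exists (Z.opp (Z.of_nat j)), (proj_compl M (iterN j V h)).
      split; [apply (proj_orth M HM) | reflexivity].
    - rewrite hnorm_sub_sym. apply HN. lia. }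
  assert (Hproj : proj (orth (cspan defect_orbit)) (iota h) = r).
  { apply proj_unique.
    - intros a b. apply orth_sub.
    - apply remainder_lim_orth, Hr.
    - intros m Hm. rewrite h_innerC, (Hm _ Hspan). cx. }
  unfold series_to. rewrite Hproj. apply sqconv_conv, Hpsum.
Qed.

End Orbit.

End PartialIsometryDilation.

Theorem mainTheorem8 (H : Hilbert) (Hsep : separable H) (n : nat)
  (dom : H -> Prop) (B : H -> H) (HB : in_Sn H n dom B)
  (w : Cx) (Hw : Cim w <> 0%R)
  (K : Hilbert) (iota : H -> K) (U Uinv : K -> K)
  (Hdil : minimal_unitary_dilation H K iota U Uinv (Vw H dom B w)) :
  let Pstar := proj (orth (cspan (fun y => exists (k : Z) (x : H),
                   kerBstar H dom B w x /\ y = zpow U Uinv k (iota x)))) in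
  forall h : H,
    series_to (fun j : nat => zpow U Uinv (Z.opp (Z.of_nat j))
                                (iota (Pw H dom B w (iterN j (Vw H dom B w) h))))
              (hsub (iota h) (Pstar (iota h))).
Proof.
  intros Pstar h.
  destruct HB as [Hlin [Hsym [Hclosed _]]].
  destruct Hdil as [Hdil _].
  assert (HM : closed_subspace (ran H dom B (Cconj w))).
  { apply ran_closed_subspace; [assumption.. | simpl; lra]. }
  exact (wold_series _ _ iota U Uinv HM (Vw_proj dom B w HM)
           (Vw_isometric dom B Hsym w HM) Hdil h).
Qed.
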